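(* Let $K$ be a non-planar continuum. Then $T(x)\subset S(x)$ for every $x\in K$.
   Context: For a compactum $K$ and $A\subset K$, $T(A)$ is the set of all $y\in K$ for which there do not exist both an open set $Q\subset K$ and a continuum $W$ with $y\in Q\subset W\subset K\setminus A$; $T(x)=T(\{x\})$. $S(x)$ is the set of all $y\in K$ for which there do NOT exist two disjoint open sets $U_x,U_y\subset K$ with $x\in U_x$, $y\in U_y$ such that $K\setminus(U_x\cup U_y)$ has at most finitely many components intersecting both $\partial U_x$ and $\partial U_y$. *)

From HB Require Import structures.
From mathcomp Require Import all_boot all_order all_algebra.
From mathcomp Require Import all_classical all_reals all_analysis.
Set Implicit Arguments. Unset Strict Implicit. Unset Printing Implicit Defensive.
Import Order.TTheory GRing.Theory Num.Theory.
Import numFieldTopology.Exports.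
Local Open Scope classical_set_scope.

(* The compactum K is the whole (metric) space T.  Subsets of K are sets of T. *)

Definition is_continuum {T : topologicalType} (W : set T) : Prop :=
  W !=set0 /\ compact W /\ connected W.

Definition bdry {T : topologicalType} (U : set T) : set T :=
  closure U `&` ~` interior U.

Definition components {T : topologicalType} (A : set T) : set (set T) :=
  [set C | exists z, A z /\ C = connected_component A z].

Definition Tset {T : topologicalType} (A : set T) : set T :=
  [set y | ~ exists Q W : set T,
      [/\ open Q, is_continuum W, Q y, Q `<=` W & W `<=` ~` A]].

Definition Tpt {T : topologicalType} (x : T) : set T := Tset [set x].

Definition Spt {T : topologicalType} (x : T) : set T :=
  [set y | ~ exists Ux Uy : set T,
      [/\ open Ux /\ open Uy, Ux `&` Uy = set0, Ux x, Uy y &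
        finite_set [set C | components (~` (Ux `|` Uy)) C /\
                            C `&` bdry Ux !=set0 /\ C `&` bdry Uy !=set0]]].

Definition embedding {X Y : topologicalType} (f : X -> Y) : Prop :=
  [/\ injective f, continuous f &
      forall U : set X, open U ->
        exists V : set Y, open V /\ f @` U = f @` setT `&` V].

Definition planar (R : realType) (T : topologicalType) : Prop :=
  exists f : T -> (R * R)%type, embedding f.

(** Suppose [y] lies outside [S(x)], witnessed by disjoint open sets [Ux ∋ x]
    and [Uy ∋ y] for which only finitely many components of
    [K \ (Ux ∪ Uy)] meet both boundaries; call these components bridges.
    Let [P] be the component of [K \ Ux] containing [y]. By boundary bumping,
    the component of [K \ Ux] through any [z ∈ Uy] contains a bridge, so the
    finitely many bridges missing [P] form a closed set disjoint from [P].
    In a compact Hausdorff space components are quasi-components, so some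
    neighbourhood [Y] of [y] cuts a clopen piece of [K \ Ux] missing these
    bridges; then every [z ∈ Uy ∩ Y] lies in [P]. The open set [Uy ∩ Y] and
    the continuum [P ⊆ K \ {x}] show that [y] is not in [T(x)]. *)

From HB Require Import structures.
From mathcomp Require Import all_boot all_order all_algebra.
From mathcomp Require Import all_classical all_reals all_analysis.
Local Open Scope classical_set_scope.

Set Implicit Arguments.
Unset Strict Implicit.
Unset Printing Implicit Defensive.

Section quasi_components.
Context {T : topologicalType}.
Hypotheses (hT : hausdorff_space T) (cT : compact [set: T]).

Lemma compact_bigcap_sub_open (G : set (set T)) (V : set T) :
  G !=set0 -> (forall A, G A -> closed A) ->
  (forall A B, G A -> G B -> G (A `&` B)) -> open V ->
  \bigcap_(A in G) A `<=` V -> exists2 A, G A & A `<=` V.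
Proof.
move=> [A0 GA0] Gcl GI oV GV; apply: contrapT => noA.
have GmeetsCV A : G A -> (A `&` ~` V) !=set0.
  move=> GA; apply: contrapT => /set0P/negP/negPn/eqP AV.
  apply: noA; exists A => // p Ap; apply: contrapT => nVp.
  by rewrite -[False]/(set0 p) -AV.
pose F := filter_from G (fun A => A `&` ~` V).
have PF : ProperFilter F.
  apply: filter_from_proper => //; apply: filter_from_filter; first by exists A0.
  by move=> A B GA GB; exists (A `&` B); [exact: GI | move=> p [[]]].
have [p [_ clF]] := cT PF filterT.
have inGV A : G A -> (A `&` ~` V) p.
  move=> GA; have cAV : closed (A `&` ~` V).
    by apply: closedI; [exact: Gcl | exact: open_closedC].
  by rewrite ((closure_id _).1 cAV) => B FB; apply: clF => //; exists A.
by have [_] := inGV _ GA0; apply; apply: GV => A /inGV[].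
Qed.

Lemma closed_disjoint_separation (A1 A2 : set T) :
  closed A1 -> closed A2 -> A1 `&` A2 = set0 ->
  exists U1 U2 : set T,
    [/\ open U1, open U2, A1 `<=` U1, A2 `<=` U2 & U1 `&` U2 = set0].
Proof.
move=> cA1 cA2 A12.
have nA1 : set_nbhs A1 (~` A2).
  apply/set_nbhsP; exists (~` A2); split => //; first exact: closed_openC.
  by move=> p A1p A2p; rewrite -[False]/(set0 p) -A12.
have [U nU clU] := compact_normal hT cT cA1 nA1.
have [C [oC A1C CU]] := (set_nbhsP _ _).1 nU.
exists C, (~` closure C); split => //.
- exact/closed_openC/closed_closure.
- by move=> p A2p /(closureS CU)/clU.
- by apply/seteqP; split => // p [Cp]; apply; exact: subset_closure.
Qed.

Lemma separated_closedl (A B : set T) :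
  closed (A `|` B) -> separated A B -> closed A.
Proof.
move=> cAB [clAB _]; rewrite closure_id eqEsubset; split; first exact: subset_closure.
move=> p clAp; have [//|Bp] : (A `|` B) p.
  by rewrite ((closure_id _).1 cAB); apply: closureS clAp; exact: subsetUl.
by exfalso; rewrite -[False]/(set0 p) -clAB.
Qed.

Definition rel_clopen_nbhs (E : set T) (a : T) : set (set T) :=
  [set A | exists O, [/\ open O, A = E `&` O, closed A & A a]].

Definition quasi_component (E : set T) (a : T) : set T :=
  \bigcap_(A in rel_clopen_nbhs E a) A.

Variables (E : set T) (a : T).
Hypotheses (cE : closed E) (Ea : E a).

Lemma rel_clopen_nbhsT : rel_clopen_nbhs E a E.
Proof. by exists setT; rewrite setIT; split => //; exact: openT. Qed.

Lemma rel_clopen_nbhsI A B : rel_clopen_nbhs E a A -> rel_clopen_nbhs E a B ->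
  rel_clopen_nbhs E a (A `&` B).
Proof.
move=> [OA [oA -> cA Aa]] [OB [oB -> cB Ba]]; exists (OA `&` OB); split.
- exact: openI.
- by rewrite setIACA setIid.
- exact: closedI.
- by split.
Qed.

Lemma quasi_component_closed : closed (quasi_component E a).
Proof. by apply: closed_bigI => A [? []]. Qed.

Lemma quasi_component_sub_open V : open V -> quasi_component E a `<=` V ->
  exists2 A, rel_clopen_nbhs E a A & A `<=` V.
Proof.
apply: compact_bigcap_sub_open; first by exists E; exact: rel_clopen_nbhsT.
  by move=> A [? []].
exact: rel_clopen_nbhsI.
Qed.

(** The quasi-component cannot split into two closed pieces: otherwise, after
    separating the pieces by disjoint open sets, some relatively clopen
    neighbourhood of [a] would already avoid the piece not containing [a]. *)
Lemma quasi_component_split (A1 A2 : set T) : closed A1 -> closed A2 ->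
  A1 `&` A2 = set0 -> quasi_component E a = A1 `|` A2 -> A1 a -> A2 = set0.
Proof.
move=> cA1 cA2 A12 QA A1a.
have [U1 [U2 [oU1 oU2 A1U1 A2U2 U12]]] := closed_disjoint_separation cA1 cA2 A12.
have [A GA AU] : exists2 A, rel_clopen_nbhs E a A & A `<=` U1 `|` U2.
  apply: quasi_component_sub_open; first exact: openU.
  by rewrite QA; apply: setUSS.
have [W [oW AE cA Aa]] := GA.
have AU1 : rel_clopen_nbhs E a (E `&` (W `&` U1)).
  exists (W `&` U1); split => //; first exact: openI.
    have -> : E `&` (W `&` U1) = A `&` ~` U2.
      rewrite AE; apply/seteqP; split => p.
        by move=> [Ep [Wp U1p]]; split => // U2p; rewrite -[False]/(set0 p) -U12.
      by move=> [[Ep Wp] nU2p]; split => //; split => //; have [] := AU p; rewrite ?AE.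
    by apply: closedI => //; exact: open_closedC.
  by rewrite setIA -AE; split => //; exact: A1U1.
apply/seteqP; split => // p A2p.
have Qp : quasi_component E a p by rewrite QA; right.
have [_ [_ U1p]] := Qp _ AU1.
by rewrite -U12; split => //; exact: A2U2.
Qed.

Lemma quasi_component_connected : connected (quasi_component E a).
Proof.
apply: contrapT => /connectedPn[A [A0 QA sepA]].
have cQ := quasi_component_closed; rewrite QA in cQ.
have cA0 : closed (A false) by apply: separated_closedl sepA.
have cA1 : closed (A true).
  by rewrite setUC separatedC in cQ sepA; apply: separated_closedl sepA.
have dA := separated_disjoint sepA.
have : quasi_component E a a by move=> B [? []].
rewrite QA => -[aA0|aA1].
- by have [p] := A0 true; rewrite (quasi_component_split cA0 cA1 dA QA aA0).
- rewrite setIC in dA; rewrite setUC in QA.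
  by have [p] := A0 false; rewrite (quasi_component_split cA1 cA0 dA QA aA1).
Qed.

Lemma quasi_component_sub_component :
  quasi_component E a `<=` connected_component E a.
Proof.
apply: connected_component_max; last exact: quasi_component_connected.
- by move=> B [? []].
- by move=> p; apply; exact: rel_clopen_nbhsT.
Qed.

Lemma component_rel_clopen_separation (B : set T) : closed B ->
  connected_component E a `&` B = set0 ->
  exists O, [/\ open O, O a, closed (E `&` O) & E `&` O `&` B = set0].
Proof.
move=> cB dB.
have [A [W [oW AE cA Aa]] AB] : exists2 A, rel_clopen_nbhs E a A & A `<=` ~` B.
  apply: quasi_component_sub_open; first exact: closed_openC.
  move=> p /quasi_component_sub_component Cp Bp.
  by rewrite -[False]/(set0 p) -dB.
rewrite AE in Aa cA AB; exists W; split => //; first by case: Aa.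
exact/disjoints_subset.
Qed.

End quasi_components.

Section boundary_bumping.
Context {T : topologicalType}.

Lemma connected_sub_rel_clopen (Z E O : set T) : connected Z -> Z `<=` E ->
  open O -> closed (E `&` O) -> Z `&` O !=set0 -> Z `<=` O.
Proof.
move=> cZ ZE oO cEO ZO0; suff <- : Z `&` O = Z by move=> p [].
apply: cZ => //; first by exists O.
exists (E `&` O) => //; rewrite setIA (setIidl ZE) //.
Qed.

Hypotheses (hT : hausdorff_space T) (cT : compact [set: T]).

Lemma boundary_bumping (P E : set T) (p a : T) : connected P -> closed E ->
  E `<=` P -> P p -> ~ E p -> E a ->
  exists c, connected_component E a c /\ closure (P `&` ~` E) c.
Proof.
move=> cP cE EP Pp nEp Ea; apply: contrapT => noc.
set B := closure (P `&` ~` E).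
have dB : connected_component E a `&` B = set0.
  by apply/seteqP; split => // c [Cc Bc]; apply: noc; exists c.
have [Y [oY Ya cEY dEY]] :=
  component_rel_clopen_separation hT cT cE Ea (@closed_closure _ _) dB.
have PEY : P `&` (Y `&` ~` B) = E `&` Y.
  apply/seteqP; split => q.
    move=> [Pq [Yq nBq]]; split => //; apply: contrapT => nEq.
    by apply: nBq; apply: subset_closure.
  move=> [Eq Yq]; split; first exact: EP.
  by split => // Bq; rewrite -[False]/(set0 q) -dEY.
have PYB : P `<=` Y `&` ~` B.
  apply: (@connected_sub_rel_clopen P P) => //.
  - by apply: openI => //; exact/closed_openC/closed_closure.
  - by rewrite PEY.
  - by exists a; rewrite PEY.
by have [_] := PYB _ Pp; apply; apply: subset_closure.
Qed.

End boundary_bumping.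

Lemma closure_notin_bdry {T : topologicalType} (U : set T) (c : T) :
  closure U c -> ~ U c -> bdry U c.
Proof. by move=> clUc nUc; split => // /interior_subset. Qed.

Lemma closure_disjoint_open {T : topologicalType} (U V : set T) (c : T) :
  open U -> U `&` V = set0 -> closure V c -> ~ U c.
Proof.
move=> oU UV clVc Uc; have [q [Uq Vq]] := clVc U (open_nbhs_nbhs (conj oU Uc)).
by rewrite -[False]/(set0 q) -UV.
Qed.

Definition bridges {T : topologicalType} (Ux Uy : set T) : set (set T) :=
  [set C | components (~` (Ux `|` Uy)) C /\
           C `&` bdry Ux !=set0 /\ C `&` bdry Uy !=set0].

Section bridges.
Context {T : topologicalType}.
Hypotheses (hT : hausdorff_space T) (cT : compact [set: T])
  (Tconn : connected [set: T]).
Variables (Ux Uy : set T).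
Hypotheses (oUx : open Ux) (oUy : open Uy) (dU : Ux `&` Uy = set0).

Local Notation F := (~` (Ux `|` Uy)).
Local Notation M := (~` Ux).

Let UyM : Uy `<=` M.
Proof. by apply/disjoints_subset; rewrite setIC. Qed.

(** Bump from [z] out of [K \ Ux] to a point [c ∈ cl Ux], then bump from [c]
    inside the component of [z] out of [F] to a point [d ∈ cl Uy]; the
    component of [F] through [c] and [d] is the bridge. *)
Lemma bridge_in_component (x z : T) : Ux x -> Uy z ->
  exists c, [/\ F c, bridges Ux Uy (connected_component F c)
              & connected_component F c `<=` connected_component M z].
Proof.
move=> Uxx Uyz.
have cM : closed M := open_closedC oUx.
have cF : closed F := open_closedC (openU oUx oUy).
have Mz : M z := UyM Uyz.
set Z := connected_component M z.
have [c [Zc clc]] :=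
  boundary_bumping hT cT (p := x) Tconn cM (subsetT M) I (fun h => h Uxx) Mz.
have clUxc : closure Ux c by apply: closureS clc => q [_ /contrapT].
have Mc : M c := connected_component_sub Zc.
have Fc : F c by move=> [//|]; apply: closure_disjoint_open oUy _ clUxc; rewrite setIC.
have cZF : closed (Z `&` F) by apply: closedI => //; exact: component_closed.
have [d [dZFc clZd]] := boundary_bumping hT cT (p := z)
  (@component_connected _ M z) cZF (@subIsetl _ _ _) (connected_component_refl Mz)
  (fun h => h.2 (or_intror Uyz)) (conj Zc Fc).
have ZFF : connected_component (Z `&` F) c `<=` connected_component F c.
  apply: connected_component_max; first exact: connected_component_refl.
  - by move=> q /connected_component_sub[].
  - exact: component_connected.
have Fd : F d := connected_component_sub (ZFF _ dZFc).
have clUyd : closure Uy d.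
  apply: closureS clZd => q [Zq nZFq]; apply: contrapT => nUyq; apply: nZFq.
  by split => //; move=> [Uxq|//]; exact: (connected_component_sub Zq).
exists c; split => //.
- split; first by exists c.
  split.
    by exists c; split; [exact: connected_component_refl | exact: closure_notin_bdry].
  exists d; split; first exact: ZFF.
  by apply: closure_notin_bdry => // ?; apply: Fd; right.
- rewrite /Z (same_connected_component Zc).
  apply: connected_component_max; first exact: connected_component_refl.
  + by move=> q Fq Uxq; apply: (connected_component_sub Fq); left.
  + exact: component_connected.
Qed.

Lemma finite_bridges_component_nbhs (x y : T) : Ux x -> Uy y ->
  finite_set (bridges Ux Uy) ->
  exists Q, [/\ open Q, Q y & Q `<=` connected_component M y].
Proof.
move=> Uxx Uyy finB.
have cM : closed M := open_closedC oUx.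
have My : M y := UyM Uyy.
set P := connected_component M y.
set B := \bigcup_(C in [set C | bridges Ux Uy C /\ C `&` P = set0]) C.
have cB : closed B.
  apply: closed_bigcup; first by apply: sub_finite_set finB => C [].
  move=> C [[[w [_ ->]] _] _]; apply: component_closed.
  exact/open_closedC/openU.
have dPB : P `&` B = set0.
  apply/disjoints_subset => p Pp [C [_ CP] Cp].
  by rewrite -[False]/(set0 p) -CP.
have [Y [oY Yy cMY dMYB]] := component_rel_clopen_separation hT cT cM My cB dPB.
exists (Uy `&` Y); split => //; first exact: openI.
move=> z [Uyz Yz]; apply: contrapT => nPz.
have [c [Fc bridge_c cZ]] := bridge_in_component Uxx Uyz.
have Mz : M z := UyM Uyz.
have ZY : connected_component M z `<=` Y.
  apply: connected_sub_rel_clopen (@component_connected _ M z) _ oY cMY _.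
    exact: connected_component_sub.
  by exists z; split => //; exact: connected_component_refl.
have cP : connected_component F c `&` P = set0.
  apply/disjoints_subset => p /cZ zp Pp; apply: nPz.
  exact: connected_component_trans Pp (connected_component_sym zp).
have Bc : B c.
  by exists (connected_component F c) => //; exact: connected_component_refl.
have Mc : M c := connected_component_sub (cZ _ (connected_component_refl Fc)).
have Yc : Y c := ZY _ (cZ _ (connected_component_refl Fc)).
by rewrite -[False]/(set0 c) -dMYB.
Qed.

End bridges.

Theorem theorem9p7 (R : realType) (K : pseudoMetricType R)
  (hK : hausdorff_space K) (Kcpt : compact [set: K]) (Kconn : connected [set: K])
  (Kne : [set: K] !=set0) (Knp : ~ planar R K) :
  forall x : K, Tpt x `<=` Spt x.
Proof.
move=> x y Ty [Ux [Uy [[oUx oUy] dU Uxx Uyy finB]]].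
have [Q [oQ Qy QP]] :=
  finite_bridges_component_nbhs hK Kcpt Kconn oUx oUy dU Uxx Uyy finB.
apply: Ty; exists Q, (connected_component (~` Ux) y); split => //.
- split; first by exists y; exact: QP.
  split; last exact: component_connected.
  apply: subclosed_compact Kcpt _ => //.
  exact/component_closed/open_closedC.
- by move=> q /connected_component_sub nUxq qx; apply: nUxq; rewrite qx.
Qed.
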